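(* For $n=2,3,\dots$ let $\Omega_n=\{1,\dots,n\}$, $\mathcal P_n=\mathcal P(\Omega_n)$ and $g_n$ the Fisher co-metric on $\mathcal P_n$. Let $\{h_n\}_{n\ge2}$ be given, where $h_n$ is a contravariant tensor field of degree 2 on $\mathcal P_n$ mapping each $p\in\mathcal P_n$ continuously to a non-degenerate symmetric bilinear form $h_{n,p}:T_p^*(\mathcal P_n)^2\to\mathbb R$. The following are equivalent: (i) there is $c\in\mathbb R\setminus\{0\}$ with $h_n=c\,g_n$ for all $n$; (ii) for all $m\le n$ and every pair of a Markov embedding $\Phi:\mathcal P_m\to\mathcal P_n$ and a Markov co-embedding $\Psi:\mathcal P_n\to\mathcal P_m$ with $\Psi\circ\Phi=\mathrm{id}_{\mathcal P_m}$, $$h_{m,p}(\alpha_p,\Phi^*_p\beta_{\Phi(p)})=h_{n,\Phi(p)}(\Psi^*_{\Phi(p)}\alpha_p,\beta_{\Phi(p)})\quad\forall p\in\mathcal P_m,\ \alpha_p\in T^*_p(\mathcal P_m),\ \beta_{\Phi(p)}\in T^*_{\Phi(p)}(\mathcal P_n).$$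
   Context: $\mathcal P(\Omega)$ is the manifold of strictly positive probability distributions on a finite set $\Omega$. The Fisher co-metric on $T^*_p(\mathcal P(\Omega))$ is $g_p((d\langle A\rangle)_p,(d\langle B\rangle)_p)=\mathrm{Cov}_p(A,B)$, where $\langle A\rangle(p)=\sum_\omega p(\omega)A(\omega)$. A Markov map $\mathcal P_m\to\mathcal P_n$ is a map $p\mapsto\sum_xW(\cdot|x)p(x)$ for a channel $W$ with $\forall y\,\exists x\,W(y|x)>0$. A Markov map $\Phi$ is a Markov embedding if some Markov map $\Psi$ satisfies $\Psi\circ\Phi=\mathrm{id}$; such $\Psi$ is a Markov co-embedding. $\Phi^*_p$, $\Psi^*_q$ denote transposes of the differentials $(d\Phi)_p$, $(d\Psi)_q$. *)

From HB Require Import structures.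
From mathcomp Require Import all_boot all_order all_algebra.
From mathcomp Require Import reals.
Set Implicit Arguments. Unset Strict Implicit. Unset Printing Implicit Defensive.
Import Order.TTheory GRing.Theory Num.Theory.
Local Open Scope ring_scope.

Section Defs.
Variable R : realType.

Definition in_simplex n (p : 'I_n -> R) : Prop :=
  (forall i, 0 < p i) /\ \sum_i p i = 1.

(* A covector (d<A>)_p in T_p^*(P_n) is represented by A : 'I_n -> R,
   two representatives giving the same covector iff they differ by a
   constant.  A bilinear form on T_p^*(P_n) is thus a bilinear form on
   representatives that is invariant under adding constants. *)
Definition cotangent_bilinear n (b : ('I_n -> R) -> ('I_n -> R) -> R) : Prop :=
  [/\ forall (a : R) A A' B, b (fun i => a * A i + A' i) B = a * b A B + b A' B,
      forall (a : R) A B B', b A (fun i => a * B i + B' i) = a * b A B + b A B',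
      forall (c : R) A B, b (fun i => A i + c) B = b A B &
      forall (c : R) A B, b A (fun i => B i + c) = b A B].

Definition cotangent_symmetric n (b : ('I_n -> R) -> ('I_n -> R) -> R) : Prop :=
  forall A B, b A B = b B A.

Definition nondegenerate_form n (b : ('I_n -> R) -> ('I_n -> R) -> R) : Prop :=
  forall A, (forall B, b A B = 0) -> exists c : R, forall i, A i = c.

Definition continuous_on_simplex n (f : ('I_n -> R) -> R) : Prop :=
  forall p, in_simplex p -> forall eps : R, 0 < eps ->
    exists2 delta : R, 0 < delta &
      forall q, in_simplex q -> (forall i, `|q i - p i| < delta) ->
        `|f q - f p| < eps.

(* Fisher co-metric: g_p(dA, dB) = Cov_p(A, B) *)
Definition fisher n (p A B : 'I_n -> R) : R :=
  \sum_i p i * A i * B i - (\sum_i p i * A i) * (\sum_i p i * B i).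

(* channel W with W x y = W(y|x), defining a Markov map P_m -> P_n *)
Definition markov_channel m n (W : 'I_m -> 'I_n -> R) : Prop :=
  [/\ forall x y, 0 <= W x y,
      forall x, \sum_y W x y = 1 &
      forall y, exists x, 0 < W x y].

Definition markov_map m n (W : 'I_m -> 'I_n -> R) (p : 'I_m -> R) : 'I_n -> R :=
  fun y => \sum_x W x y * p x.

(* transpose of the differential of the Markov map acting on covector
   representatives: (Phi^*_p (dB))(x) = sum_y W(y|x) B(y) *)
Definition markov_pullback m n (W : 'I_m -> 'I_n -> R) (B : 'I_n -> R) : 'I_m -> R :=
  fun x => \sum_y W x y * B y.

End Defs.

(* If [V o W = id] on the simplex, [V] maps every state in the support of [W(.|x)] back
   to [x] deterministically, and this makes the covariance invariant: (i) implies (ii).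
   Conversely, an involution of the states is a Markov map that is its own co-embedding
   and fixes the uniform point, so at the uniform point the Gram matrix of [h] is
   exchangeable; invariance under constants then forces [h_N = c_N g_N] there.  Splitting
   state [i] into [k i] equally likely copies is a Markov embedding of the rational point
   [k / sum k] onto a uniform point, with a deterministic co-embedding, so [h = c_N g] at
   rational points; splitting uniform points shows that [c_N] does not depend on [N].
   Continuity extends [h = c g] to the whole simplex, and non-degeneracy gives [c <> 0]. *)

From HB Require Import structures.
From mathcomp Require Import all_boot all_order all_algebra all_fingroup.
From mathcomp Require Import reals boolp.
From mathcomp Require Import lra ring.
Import Order.TTheory GRing.Theory Num.Theory.
Local Open Scope ring_scope.
Set Implicit Arguments. Unset Strict Implicit. Unset Printing Implicit Defensive.

Section Simplex.
Variable R : realType.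

Definition delta n (k : 'I_n) : 'I_n -> R := fun x => (x == k)%:R.

Definition unif n : 'I_n -> R := fun _ => n%:R^-1.
Arguments unif : clear implicits.

Lemma sum_deltaMl n (a : 'I_n) (F : 'I_n -> R) : \sum_y delta a y * F y = F a.
Proof.
rewrite (bigD1 a) //= /delta eqxx mul1r big1 ?addr0 // => y /negbTE ->.
by rewrite mul0r.
Qed.

Lemma sum_deltaMr n (a : 'I_n) (F : 'I_n -> R) : \sum_y F y * delta a y = F a.
Proof. by rewrite -[RHS](sum_deltaMl a); apply: eq_bigr => y _; rewrite mulrC. Qed.

Lemma sum_delta n (a : 'I_n) : \sum_y delta a y = 1.
Proof. by rewrite -[RHS](sum_deltaMl a (fun _ => 1)); apply: eq_bigr => y _; rewrite mulr1. Qed.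

Lemma unif_simplex n : (0 < n)%N -> in_simplex (unif n).
Proof.
move=> n0; split=> [i|]; first by rewrite invr_gt0 ltr0n.
by rewrite sumr_const card_ord -[_ *+ n]mulr_natr mulVf // pnatr_eq0 -lt0n.
Qed.

Lemma simplex_dim_gt0 n (p : 'I_n -> R) : in_simplex p -> (0 < n)%N.
Proof. by case: n p => // p [_]; rewrite big_ord0 => /eqP; rewrite eq_sym oner_eq0. Qed.

Lemma simplex_le1 n (p : 'I_n -> R) : in_simplex p -> forall i, 0 <= p i <= 1.
Proof.
move=> [p0 p1] i; rewrite ltW //= -p1 (bigD1 i) //= lerDl sumr_ge0 // => j _.
exact: ltW.
Qed.

Lemma markov_map_simplex m n (W : 'I_m -> 'I_n -> R) p :
  markov_channel W -> in_simplex p -> in_simplex (markov_map W p).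
Proof.
move=> [W0 W1 W2] [p0 p1]; split.
  move=> y; have [x Wxy] := W2 y; rewrite /markov_map (bigD1 x) //=.
  by rewrite ltr_wpDr ?mulr_gt0 // sumr_ge0 // => i _; rewrite mulr_ge0 // ltW.
rewrite /markov_map exchange_big /= -[RHS]p1; apply: eq_bigr => x _.
by rewrite -mulr_suml W1 mul1r.
Qed.

Definition rational_point n (k : 'I_n -> nat) : 'I_n -> R :=
  fun i => (k i)%:R / (\sum_j k j)%:R.

Lemma rational_point_simplex n (k : 'I_n -> nat) :
  (0 < n)%N -> (forall i, 0 < k i)%N -> in_simplex (rational_point k).
Proof.
move=> n0 k0; have sum_gt0 : (0 < \sum_j k j)%N.
  by rewrite (bigD1 (Ordinal n0)) //= ltn_addr.
split=> [i|]; first by rewrite divr_gt0 // ltr0n.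
by rewrite -mulr_suml -natr_sum mulfV // pnatr_eq0 -lt0n.
Qed.

Lemma rational_point_const n k : (0 < k)%N ->
  rational_point (fun _ : 'I_n => k) = unif n.
Proof.
move=> k0; apply: funext => i.
rewrite /rational_point /unif sum_nat_const card_ord natrM invfM mulrCA mulfV ?mulr1 //.
by rewrite pnatr_eq0 -lt0n.
Qed.

End Simplex.
Arguments delta {R n} k.
Arguments unif {R} n.
Arguments rational_point {R n} k.

Section CotangentForm.
Variables (R : realType) (n : nat) (b : ('I_n -> R) -> ('I_n -> R) -> R).
Hypothesis b_bil : cotangent_bilinear b.

Lemma linear_expand (F : ('I_n -> R) -> R) :
  (forall (a : R) A A', F (fun i => a * A i + A' i) = a * F A + F A') ->
  forall A, F A = \sum_i A i * F (delta i).
Proof.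
move=> linF A.
have F0 : F (fun _ => 0) = 0.
  have := linF 1 (fun _ => 0) (fun _ => 0).
  rewrite (_ : (fun _ => _) = fun _ => 0); last by apply: funext => i; rewrite mul1r addr0.
  lra.
rewrite {1}(_ : A = (fun x => \sum_(i <- index_enum 'I_n) A i * delta i x)); last first.
  by apply: funext => x; under eq_bigr => i _ do rewrite /delta eq_sym; rewrite sum_deltaMr.
elim: (index_enum 'I_n) => [|i r IH].
  by rewrite big_nil -F0; congr F; apply: funext => x; rewrite big_nil.
by rewrite big_cons -IH -linF; congr F; apply: funext => x; rewrite big_cons.
Qed.

Lemma cotangent_expand A B :
  b A B = \sum_i \sum_j A i * B j * b (delta i) (delta j).
Proof.
have [bl br _ _] := b_bil.
rewrite (linear_expand (fun a A A' => bl a A A' B)); apply: eq_bigr => i _.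
rewrite (linear_expand (fun a B B' => br a (delta i) B B') B) mulr_sumr; apply: eq_bigr => j _.
by rewrite mulrA.
Qed.

(* Invariance under adding constants makes every row of the Gram matrix sum to 0. *)
Lemma cotangent_gram_row_sum i : \sum_j b (delta i) (delta j) = 0.
Proof.
have [_ br _ bc] := b_bil.
have lin := linear_expand (fun a B B' => br a (delta i) B B').
have := lin (fun _ => 0 + 1); rewrite bc lin.
under [X in _ = X -> _]eq_bigr do rewrite add0r mul1r.
by move=> <-; rewrite big1 // => j _; rewrite mul0r.
Qed.

Lemma exchangeable_cotangent_form (alpha beta : R) : (0 < n)%N ->
  (forall i, b (delta i) (delta i) = alpha) ->
  (forall i j, i != j -> b (delta i) (delta j) = beta) ->
  forall A B, b A B = n%:R * (alpha - beta) * fisher (unif n) A B.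
Proof.
move=> n0 diag offdiag A B.
have gram i j : b (delta i) (delta j) = beta + (alpha - beta) * delta i j.
  rewrite /delta; have [->|ji] := eqVneq j i; first by rewrite diag mulr1 addrC subrK.
  by rewrite offdiag 1?eq_sym // mulr0 addr0.
have row : n%:R * beta + (alpha - beta) = 0.
  have i0 : 'I_n := Ordinal n0.
  rewrite -(cotangent_gram_row_sum i0); under [RHS]eq_bigr do rewrite gram.
  by rewrite big_split /= sumr_const card_ord -mulr_sumr sum_delta mulr1 mulr_natl.
rewrite cotangent_expand.
under eq_bigr => i _ do under eq_bigr => j _ do rewrite gram.
have -> : \sum_i \sum_j A i * B j * (beta + (alpha - beta) * delta i j)
    = \sum_i (beta * (\sum_j B j) * A i + (alpha - beta) * (A i * B i)).
  apply: eq_bigr => i _.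
  rewrite (eq_bigr (fun j => beta * A i * B j + (alpha - beta) * A i * (B j * delta i j)));
    last by move=> j _; ring.
  by rewrite big_split /= -!mulr_sumr sum_deltaMr; ring.
rewrite big_split /= -!mulr_sumr /fisher /unif.
under [\sum_i _ * A i * B i]eq_bigr do rewrite -mulrA.
rewrite -!mulr_sumr.
have n0' : n%:R != 0 :> R by rewrite pnatr_eq0 -lt0n.
have -> : alpha - beta = - (n%:R * beta) by lra.
by field.
Qed.

End CotangentForm.

Lemma fisher_unif_delta (R : realType) n (i : 'I_n) :
  fisher (unif n) (delta i) (delta i) = n%:R^-1 * (1 - n%:R^-1) :> R.
Proof.
rewrite /fisher sum_deltaMr /delta eqxx.
under eq_bigr do rewrite -/(delta i _); rewrite sum_deltaMr /unif.
by rewrite !mulr1; ring.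
Qed.

Lemma fisher_unif_scale_unique (R : realType) n (c c' : R) : (1 < n)%N ->
  (forall A B, c * fisher (unif n) A B = c' * fisher (unif n) A B) -> c = c'.
Proof.
move=> n1 /(_ (delta (Ordinal (ltnW n1))) (delta (Ordinal (ltnW n1)))).
rewrite fisher_unif_delta => /mulIf; apply.
have n_gt1 : 1 < n%:R :> R by rewrite ltr1n.
by rewrite mulf_neq0 // ?invr_eq0 ?subr_eq0 ?gt_eqF ?invf_lt1 // (lt_trans ltr01).
Qed.

Lemma nondegenerate_form_nonzero (R : realType) n (b : ('I_n -> R) -> ('I_n -> R) -> R) :
  (1 < n)%N -> nondegenerate_form b -> ~ (forall A B, b A B = 0).
Proof.
move=> n1 nondeg b0; set i0 : 'I_n := Ordinal (ltnW n1).
have [c cst] := nondeg (delta i0) (b0 _).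
have := cst (Ordinal n1); rewrite -(cst i0) /delta eqxx.
by move/eqP; rewrite eq_sym oner_eq0.
Qed.

Lemma markov_map_comp (R : realType) l m n (W : 'I_l -> 'I_m -> R)
    (V : 'I_m -> 'I_n -> R) p :
  markov_map V (markov_map W p) = markov_map (fun x z => \sum_y W x y * V y z) p.
Proof.
apply: funext => z; rewrite /markov_map.
under eq_bigr do rewrite mulr_sumr; rewrite exchange_big /=.
by apply: eq_bigr => x _; rewrite mulr_suml; apply: eq_bigr => y _; ring.
Qed.

Lemma markov_map_pullback_dual (R : realType) m n (W : 'I_m -> 'I_n -> R) p F :
  \sum_y markov_map W p y * F y = \sum_x p x * markov_pullback W F x.
Proof.
rewrite /markov_map /markov_pullback; under eq_bigr do rewrite mulr_suml.
rewrite exchange_big /=; apply: eq_bigr => x _; rewrite mulr_sumr.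
by apply: eq_bigr => y _; ring.
Qed.

Section MarkovEmbedding.
Variables (R : realType) (m n : nat) (W : 'I_m -> 'I_n -> R) (V : 'I_n -> 'I_m -> R).
Hypothesis W_channel : markov_channel W.
Hypothesis V_channel : markov_channel V.
Hypothesis VW_id : forall p : 'I_m -> R, in_simplex p ->
  forall x, markov_map V (markov_map W p) x = p x.

(* The composite kernel fixes the uniform point and its average with a vertex,
   hence every vertex. *)
Lemma coembedding_kernel_delta x0 x : \sum_y W x0 y * V y x = delta x0 x.
Proof.
set K := fun x1 z => \sum_y W x1 y * V y z.
have fixK q : in_simplex q -> \sum_x1 K x1 x * q x1 = q x.
  move=> sq; rewrite -(VW_id sq x) markov_map_comp.
  by apply: eq_bigr => x1 _; rewrite /K.
have m0 : (0 < m)%N := leq_ltn_trans (leq0n x0) (ltn_ord x0).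
have [p0 p1] := unif_simplex R m0.
set p := unif m in p0 p1.
have sp' : in_simplex (fun i => (delta x0 i + p i) / 2).
  split=> [i|]; first by rewrite divr_gt0 // ltr_wpDl ?ler0n.
  by rewrite -mulr_suml big_split /= sum_delta p1; lra.
have := fixK _ sp'; under eq_bigr do rewrite mulrA mulrDr.
by rewrite -mulr_suml big_split /= sum_deltaMr fixK // /K; lra.
Qed.

Lemma coembedding_on_support x0 y : 0 < W x0 y -> forall x, V y x = delta x0 x.
Proof.
move=> Wpos x; have [W0 W1 _] := W_channel; have [V0 V1 _] := V_channel.
have V_le1 y1 x1 : V y1 x1 <= 1.
  by rewrite -(V1 y1) (bigD1 x1) //= lerDl sumr_ge0.
have Vy : V y x0 = 1.
  have sum0 : \sum_y W x0 y * (1 - V y x0) = 0.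
    under eq_bigr do rewrite mulrBr mulr1.
    by rewrite sumrB W1 coembedding_kernel_delta /delta eqxx subrr.
  have ge0 y1 : true -> 0 <= W x0 y1 * (1 - V y1 x0).
    by move=> _; rewrite mulr_ge0 // subr_ge0 V_le1.
  have /eqP := psumr_eq0P ge0 sum0 (i := y) isT.
  by rewrite mulf_eq0 gt_eqF //= subr_eq0 => /eqP.
rewrite /delta; have [->|ne] := eqVneq x x0; first by rewrite Vy.
have : \sum_(i | i != x0) V y i = 0.
  by have := V1 y; rewrite (bigD1 x0) //= Vy; lra.
by move/psumr_eq0P => ->.
Qed.

Lemma pullback_coembedding_on_support x0 y A :
  W x0 y * markov_pullback V A y = W x0 y * A x0.
Proof.
have [W0 _ _] := W_channel.
have [->|Wn0] := eqVneq (W x0 y) 0; first by rewrite !mul0r.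
have Wpos : 0 < W x0 y by rewrite lt_neqAle eq_sym Wn0 W0.
rewrite /markov_pullback; under eq_bigr do rewrite (coembedding_on_support Wpos) mulrC.
by rewrite sum_deltaMr.
Qed.

Lemma fisher_markov_invariant p A B :
  fisher p A (markov_pullback W B) = fisher (markov_map W p) (markov_pullback V A) B.
Proof.
have [_ W1 _] := W_channel.
have pbV_A x : markov_pullback W (markov_pullback V A) x = A x.
  rewrite /markov_pullback; under eq_bigr do rewrite pullback_coembedding_on_support.
  by rewrite -mulr_suml W1 mul1r.
have pbV_AB x : markov_pullback W (fun y => markov_pullback V A y * B y) x
              = A x * markov_pullback W B x.
  rewrite /markov_pullback mulr_sumr; apply: eq_bigr => y _.
  by rewrite mulrA pullback_coembedding_on_support; ring.
rewrite /fisher.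
under [\sum_y _ * _ * B y]eq_bigr do rewrite -mulrA.
rewrite !markov_map_pullback_dual.
congr (_ - _ * _); apply: eq_bigr => x _.
  by rewrite -mulrA; congr (_ * _); exact/esym/pbV_AB.
by congr (_ * _); exact/esym/pbV_A.
Qed.

End MarkovEmbedding.

Lemma fibration_exists m (k : 'I_m -> nat) :
  exists N (f : 'I_N -> 'I_m), forall i, (\sum_y (f y == i))%N = k i.
Proof.
pose T := {i : 'I_m & 'I_(k i)}.
exists #|{: T}|, (fun y => tag (@enum_val T predT y)) => i.
rewrite (reindex (@enum_rank T)) /=; last first.
  by exists (@enum_val T predT) => y _; [exact: enum_rankK | exact: enum_valK].
under eq_bigr do rewrite enum_rankK.
rewrite -(sig_big_dep (fun _ => true) (fun _ _ => true)
                      (fun j (_ : 'I_(k j)) => (j == i) : nat)) /=.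
under eq_bigr do rewrite sum_nat_const card_ord.
rewrite (bigD1 i) //= eqxx muln1 big1 ?addn0 // => j /negbTE ->.
by rewrite muln0.
Qed.

Lemma fibration_card m N (f : 'I_N -> 'I_m) (k : 'I_m -> nat) :
  (forall i, (\sum_y (f y == i))%N = k i) -> (\sum_i k i)%N = N.
Proof.
move=> fib; under eq_bigr do rewrite -fib.
rewrite exchange_big /= -[RHS]card_ord -sum1_card; apply: eq_bigr => y _.
by rewrite (bigD1 (f y)) //= eqxx big1 // => i /negbTE; rewrite eq_sym => ->.
Qed.

Lemma fibration_dim_le m N (f : 'I_N -> 'I_m) (k : 'I_m -> nat) :
  (forall i, (\sum_y (f y == i))%N = k i) -> (forall i, 0 < k i)%N -> (m <= N)%N.
Proof.
move=> fib k0; rewrite -(fibration_card fib) -[X in (X <= _)%N]card_ord -sum1_card.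
exact: leq_sum.
Qed.

Section RationalApproximation.
Variable R : realType.

Lemma normr_sum_simplex_le n (q C : 'I_n -> R) : in_simplex q ->
  `|\sum_i q i * C i| <= \sum_i `|C i|.
Proof.
move=> sq; apply: le_trans (ler_norm_sum _ _ _) _; apply: ler_sum => i _.
have /andP[q0 q1] := simplex_le1 sq i.
by rewrite normrM ger0_norm // ler_piMl.
Qed.

Lemma normr_sumB_le n (p q C : 'I_n -> R) d : (forall i, `|q i - p i| <= d) ->
  `|\sum_i q i * C i - \sum_i p i * C i| <= d * \sum_i `|C i|.
Proof.
move=> qp; rewrite -sumrB mulr_sumr; apply: le_trans (ler_norm_sum _ _ _) _.
by apply: ler_sum => i _; rewrite -mulrBl normrM ler_wpM2r.
Qed.

Lemma fisher_lipschitz n (A B : 'I_n -> R) : exists2 K, 0 <= K &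
  forall p q d, in_simplex p -> in_simplex q -> (forall i, `|q i - p i| <= d) ->
  `|fisher q A B - fisher p A B| <= d * K.
Proof.
set SA := \sum_i `|A i|; set SB := \sum_i `|B i|; set SAB := \sum_i `|A i * B i|.
have SA0 : 0 <= SA by rewrite sumr_ge0.
have SB0 : 0 <= SB by rewrite sumr_ge0.
exists (SAB + 2 * (SA * SB)) => [|p q d sp sq qp].
  by rewrite addr_ge0 ?sumr_ge0 // mulr_ge0 // mulr_ge0.
have d0 : 0 <= d := le_trans (normr_ge0 _) (qp (Ordinal (simplex_dim_gt0 sp))).
have E : fisher q A B - fisher p A B =
    (\sum_i q i * (A i * B i) - \sum_i p i * (A i * B i))
  - ((\sum_i q i * A i - \sum_i p i * A i) * (\sum_i q i * B i)
     + (\sum_i p i * A i) * (\sum_i q i * B i - \sum_i p i * B i)).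
  rewrite /fisher; under eq_bigr do rewrite -mulrA.
  under [in X in _ - X]eq_bigr do rewrite -mulrA.
  ring.
rewrite E; apply: le_trans (ler_normB _ _) _.
apply: le_trans (lerD (normr_sumB_le _ qp) (ler_normD _ _)) _.
rewrite !normrM mulrDr lerD2l.
have T1 := ler_pM (normr_ge0 _) (normr_ge0 _) (normr_sumB_le A qp) (normr_sum_simplex_le B sq).
have T2 := ler_pM (normr_ge0 _) (normr_ge0 _) (normr_sum_simplex_le A sp) (normr_sumB_le B qp).
apply: le_trans (lerD T1 T2) _.
by rewrite -/SA -/SB le_eqVlt; apply/orP; left; apply/eqP; ring.
Qed.

Lemma mulr_divDr1_lt (K e : R) : 0 <= K -> 0 < e -> K * (e / (K + 1)) < e.
Proof.
move=> K0 e0; have K1 : 0 < K + 1 by lra.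
by rewrite mulrA ltr_pdivrMr // mulrC ltr_pM2l // ltrDl.
Qed.

Lemma fisher_continuous n (A B : 'I_n -> R) :
  continuous_on_simplex (fun p => fisher p A B).
Proof.
have [K K0 lipK] := fisher_lipschitz A B.
move=> p sp e e0; have K1 : 0 < K + 1 by lra.
exists (e / (K + 1)) => [|q sq qp]; first by rewrite divr_gt0.
apply: le_lt_trans (lipK p q _ sp sq (fun i => ltW (qp i))) _.
by rewrite mulrC mulr_divDr1_lt.
Qed.

Lemma continuous_on_simplexZ n (c : R) (F : ('I_n -> R) -> R) :
  continuous_on_simplex F -> continuous_on_simplex (fun p => c * F p).
Proof.
move=> contF p sp e e0.
have c1 : 0 < `|c| + 1 by rewrite ltr_wpDl.
have [d d0 Fd] := contF p sp (e / (`|c| + 1)) (divr_gt0 e0 c1).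
exists d => // q sq qp; rewrite -mulrBr normrM.
apply: le_lt_trans (ler_wpM2l (normr_ge0 c) (ltW (Fd q sq qp))) _.
exact: mulr_divDr1_lt.
Qed.

(* Rounding [M * p] up gives weights [k] with [M <= sum k <= M + n],
   hence [|k i - (sum k) p i| <= n]. *)
Lemma rational_point_trunc_approx n (p : 'I_n -> R) M : in_simplex p -> (0 < M)%N ->
  forall i, `|rational_point (fun j => (Num.truncn (M%:R * p j)).+1) i - p i|
              <= n%:R / M%:R.
Proof.
move=> sp M0 i; have [p0 p1] := sp.
set k := fun j => (Num.truncn (M%:R * p j)).+1.
have k_bnd j : M%:R * p j < (k j)%:R <= M%:R * p j + 1.
  have /andP[lo hi] := truncn_itv (mulr_ge0 (ler0n _ M) (ltW (p0 j))).
  by rewrite hi -natr1 lerD2r.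
set S := (\sum_j k j)%:R : R.
have M_sum : M%:R = \sum_j M%:R * p j :> R by rewrite -mulr_sumr p1 mulr1.
have MS : M%:R <= S.
  rewrite /S natr_sum M_sum; apply: ler_sum => j _.
  by have /andP[/ltW] := k_bnd j.
have SM : S <= M%:R + n%:R.
  have n_sum : n%:R = \sum_(j < n) 1 :> R by rewrite sumr_const card_ord.
  rewrite /S natr_sum M_sum n_sum -big_split.
  by apply: ler_sum => j _; have /andP[_] := k_bnd j.
have M0' : 0 < M%:R :> R by rewrite ltr0n.
have S0 : 0 < S by apply: lt_le_trans MS.
have /andP[pi0 pi1] := simplex_le1 sp i.
have /andP[klo khi] := k_bnd i.
have n1 : 1 <= n%:R :> R by rewrite ler1n (simplex_dim_gt0 sp).
have err : `|(k i)%:R - S * p i| <= n%:R.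
  rewrite ler_norml; apply/andP; split.
    have : S * p i <= (M%:R + n%:R) * p i by apply: ler_wpM2r.
    have : n%:R * p i <= n%:R by rewrite ler_piMr ?ler0n.
    nra.
  have : M%:R * p i <= S * p i by apply: ler_wpM2r.
  nra.
have -> : rational_point k i - p i = ((k i)%:R - S * p i) / S.
  by rewrite /rational_point -/S; field; rewrite gt_eqF.
rewrite normrM normfV (gtr0_norm S0).
apply: le_trans (ler_wpM2r _ err) _; first by rewrite invr_ge0 ltW.
by apply: ler_wpM2l; rewrite ?ler0n // lef_pV2 // posrE.
Qed.

Lemma rational_points_dense n (p : 'I_n -> R) d : in_simplex p -> 0 < d ->
  exists2 k : 'I_n -> nat, (forall i, 0 < k i)%N &
    forall i, `|rational_point k i - p i| < d.
Proof.
move=> sp d0; set M := (Num.truncn (n%:R / d)).+1.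
have M0 : 0 < M%:R :> R by rewrite ltr0n.
exists (fun j => (Num.truncn (M%:R * p j)).+1) => // i.
apply: le_lt_trans (rational_point_trunc_approx sp (isT : 0 < M)%N i) _.
by rewrite ltr_pdivrMr // mulrC -ltr_pdivrMr // truncnS_gt.
Qed.

Lemma eq_on_simplex_of_rational n (F G : ('I_n -> R) -> R) :
  continuous_on_simplex F -> continuous_on_simplex G ->
  (forall k : 'I_n -> nat, (forall i, 0 < k i)%N ->
     F (rational_point k) = G (rational_point k)) ->
  forall p, in_simplex p -> F p = G p.
Proof.
move=> contF contG FG p sp; apply/eqP; rewrite -subr_eq0 -normr_eq0.
apply/negPn/negP => neq; set e := `|F p - G p| in neq.
have e2 : 0 < e / 2 by rewrite divr_gt0 // lt0r neq normr_ge0.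
have [dF dF0 Fd] := contF p sp _ e2; have [dG dG0 Gd] := contG p sp _ e2.
have d0 : 0 < Num.min dF dG by rewrite lt_min dF0 dG0.
have [k k0 kp] := rational_points_dense sp d0.
have sq := rational_point_simplex R (simplex_dim_gt0 sp) k0.
set q := rational_point k in kp sq.
have [kF kG] : (forall i, `|q i - p i| < dF) /\ (forall i, `|q i - p i| < dG).
  by split=> i; have := kp i; rewrite lt_min => /andP[].
have := Fd _ sq kF; have := Gd _ sq kG; rewrite FG // => Gq Fq.
have : e < e.
  rewrite {1}/e (_ : F p - G p = (G q - G p) - (G q - F p)); last by ring.
  apply: le_lt_trans (ler_normB _ _) _.
  by rewrite [e in _ < e](splitr e) ltrD // distrC.
by rewrite ltxx.
Qed.

End RationalApproximation.

Section MarkovInvariantForms.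
Variables (R : realType) (h : forall n, ('I_n -> R) -> ('I_n -> R) -> ('I_n -> R) -> R).
Arguments h : clear implicits.
Hypothesis h_bil : forall n, (2 <= n)%N -> forall p : 'I_n -> R, in_simplex p ->
  cotangent_bilinear (h n p).
Hypothesis h_inv : forall m n, (2 <= m)%N -> (m <= n)%N ->
  forall (W : 'I_m -> 'I_n -> R) (V : 'I_n -> 'I_m -> R),
    markov_channel W -> markov_channel V ->
    (forall p : 'I_m -> R, in_simplex p ->
       forall x, markov_map V (markov_map W p) x = p x) ->
    forall p : 'I_m -> R, in_simplex p ->
    forall (A : 'I_m -> R) (B : 'I_n -> R),
      h m p A (markov_pullback W B) = h n (markov_map W p) (markov_pullback V A) B.

Definition unif_scale N (c : R) :=
  forall A B, h N (unif N) A B = c * fisher (unif N) A B.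

Lemma unif_involution_invariant N (s : 'I_N -> 'I_N) : (2 <= N)%N -> involutive s ->
  forall A B, h N (unif N) A (fun x => B (s x)) = h N (unif N) (fun y => A (s y)) B.
Proof.
move=> N2 sK A B.
pose W : 'I_N -> 'I_N -> R := fun x y => delta (s x) y.
have Ws x y : W y x = delta (s x) y.
  by rewrite /W /delta eq_sym (canF_eq sK).
have HW : markov_channel W.
  split=> [x y|x|y]; first by rewrite /W /delta ler0n.
    by rewrite /W sum_delta.
  by exists (s y); rewrite Ws /delta eqxx ltr01.
have pbW C : markov_pullback W C = (fun x => C (s x)).
  by apply: funext => x; rewrite /markov_pullback sum_deltaMl.
have mapW p : markov_map W p = (fun x => p (s x)).
  by apply: funext => x; rewrite /markov_map; under eq_bigr do rewrite Ws; rewrite sum_deltaMl.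
have WW p : in_simplex p -> forall x, markov_map W (markov_map W p) x = p x.
  by move=> _ x; rewrite !mapW sK.
have := h_inv N2 (leqnn N) HW HW WW (unif_simplex R (ltnW N2)) A B.
by rewrite !pbW mapW.
Qed.

Lemma unif_gram_involution N (s : 'I_N -> 'I_N) : (2 <= N)%N -> involutive s ->
  forall i j, h N (unif N) (delta (s i)) (delta (s j)) = h N (unif N) (delta i) (delta j).
Proof.
move=> N2 sK i j.
have deltaK k : (fun x => delta k (s x)) = delta (s k) :> ('I_N -> R).
  by apply: funext => x; rewrite /delta (canF_eq sK).
by rewrite -[in RHS](sK j) -[in RHS]deltaK unif_involution_invariant // deltaK.
Qed.

Lemma unif_scale_exists N : (2 <= N)%N -> exists c, unif_scale N c.
Proof.
move=> N2; set G := fun i j => h N (unif N) (delta i) (delta j).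
pose a : 'I_N := Ordinal (ltnW N2); pose b : 'I_N := Ordinal N2.
have ab : a != b by [].
have diag i : G i i = G a a by rewrite /G -(unif_gram_involution N2 (tpermK a i) a a) tpermL.
have offdiag i j : i != j -> G i j = G a b.
  move=> ij; set b' := tperm a i b.
  have b'i : b' != i.
    by rewrite /b' -[X in _ != X](tpermL a i) (inj_eq (can_inj (tpermK a i))) eq_sym.
  rewrite /G -(unif_gram_involution N2 (tpermK a i) a b) tpermL -/b'.
  by rewrite -(unif_gram_involution N2 (tpermK b' j) i b') tpermL tpermD // eq_sym.
exists (N%:R * (G a a - G a b)) => A B.
exact: (exchangeable_cotangent_form (h_bil N2 (unif_simplex R (ltnW N2))) (ltnW N2) diag offdiag).
Qed.

Lemma unif_scale_unique N c c' : (2 <= N)%N -> unif_scale N c -> unif_scale N c' -> c = c'.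
Proof.
move=> N2 hc hc'; apply: (fisher_unif_scale_unique N2) => A B.
by rewrite -hc -hc'.
Qed.

Section Fibration.
Variables (m N : nat) (f : 'I_N -> 'I_m) (k : 'I_m -> nat).
Hypothesis fiber : forall i, (\sum_y (f y == i))%N = k i.
Hypothesis k_gt0 : forall i, (0 < k i)%N.

Lemma sum_fiber x (G : 'I_m -> R) : \sum_y (f y == x)%:R * G (f y) = (k x)%:R * G x.
Proof.
rewrite (eq_bigr (fun y => (f y == x)%:R * G x)); last first.
  by move=> y _; have [->|] := eqVneq (f y) x; rewrite ?mul0r.
by rewrite -mulr_suml -natr_sum fiber.
Qed.

(* Splitting state [i] into [k i] equally likely copies embeds [rational_point k] onto the
   uniform point of ['I_N]; [f] itself is the co-embedding. *)
Lemma fibration_rational_scale c : (2 <= m)%N -> unif_scale N c ->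
  forall A B, h m (rational_point k) A B = c * fisher (rational_point k) A B.
Proof.
move=> m2 hc A B.
have kN : (\sum_i k i)%N = N := fibration_card fiber.
have mN : (m <= N)%N := fibration_dim_le fiber k_gt0.
have k0 i : (k i)%:R != 0 :> R by rewrite pnatr_eq0 -lt0n.
pose W : 'I_m -> 'I_N -> R := fun i y => (f y == i)%:R / (k i)%:R.
pose V : 'I_N -> 'I_m -> R := fun y i => (f y == i)%:R.
have mapW q y : markov_map W q y = q (f y) / (k (f y))%:R.
  rewrite /markov_map /W.
  under eq_bigr do rewrite mulrAC eq_sym -/(delta _ _) -mulrA.
  exact: sum_deltaMl.
have HW : markov_channel W.
  split=> [i y|i|y].
  - by rewrite /W divr_ge0 ?ler0n.
  - by rewrite /W -mulr_suml -natr_sum fiber mulfV.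
  - by exists (f y); rewrite /W eqxx mul1r invr_gt0 ltr0n.
have HV : markov_channel V.
  split=> [y i|y|i].
  - by rewrite /V ler0n.
  - by rewrite /V; under eq_bigr do rewrite eq_sym -/(delta _ _); rewrite sum_delta.
  - case: (pickP (fun y => f y == i)) => [y fy|none].
      by exists y; rewrite /V fy ltr01.
    by have := k_gt0 i; rewrite -fiber big1 // => y _; rewrite none.
have VW_id q : in_simplex q -> forall x, markov_map V (markov_map W q) x = q x.
  move=> _ x; rewrite {1}/markov_map /V; under eq_bigr do rewrite mapW.
  by rewrite (sum_fiber x (fun i => q i / (k i)%:R)) mulrCA mulfV ?mulr1.
have Wp : markov_map W (rational_point k) = unif N.
  by apply: funext => y; rewrite mapW /rational_point kN mulrAC mulfV ?mul1r.
have pbW (C : 'I_m -> R) : markov_pullback W (fun y => C (f y)) = C.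
  apply: funext => x; rewrite /markov_pullback /W.
  rewrite (eq_bigr (fun y => (f y == x)%:R * (C (f y) / (k x)%:R))); last by move=> y _; ring.
  by rewrite (sum_fiber x (fun i => C i / (k x)%:R)) mulrCA mulfV ?mulr1.
have sp := rational_point_simplex R (ltnW m2) k_gt0.
rewrite -[in LHS](pbW B) (h_inv m2 mN HW HV VW_id sp) Wp hc -Wp.
by rewrite -(fisher_markov_invariant HW HV VW_id) pbW.
Qed.

End Fibration.

Lemma unif_scale_divisor m k c : (2 <= m)%N -> (0 < k)%N ->
  unif_scale (m * k) c -> unif_scale m c.
Proof.
move=> m2 k0 hc A B.
have [N [f fib]] := fibration_exists (fun _ : 'I_m => k).
have NE : N = (m * k)%N by rewrite -(fibration_card fib) sum_nat_const card_ord.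
subst N; have := fibration_rational_scale fib (fun _ => k0) m2 hc A B.
by rewrite rational_point_const.
Qed.

Lemma unif_scale_const : exists c, forall N, (2 <= N)%N -> unif_scale N c.
Proof.
have [c hc] := unif_scale_exists (leqnn 2).
exists c => N N2.
have [c' hc'] : exists c', unif_scale (2 * N) c'.
  by apply: unif_scale_exists; rewrite leq_pmulr // ltnW.
have -> : c = c' := unif_scale_unique (leqnn 2) hc (unif_scale_divisor (leqnn 2) (ltnW N2) hc').
by apply: (unif_scale_divisor N2 (isT : 0 < 2)%N); rewrite mulnC.
Qed.

Lemma rational_point_scale : exists c, forall n (k : 'I_n -> nat),
  (2 <= n)%N -> (forall i, 0 < k i)%N ->
  forall A B, h n (rational_point k) A B = c * fisher (rational_point k) A B.
Proof.
have [c hc] := unif_scale_const; exists c => n k n2 k0.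
have [N [f fib]] := fibration_exists k.
apply: (fibration_rational_scale fib k0 n2); apply: hc.
exact: leq_trans n2 (fibration_dim_le fib k0).
Qed.

End MarkovInvariantForms.

Theorem mainTheorem13 (R : realType)
  (h : forall n : nat, ('I_n -> R) -> ('I_n -> R) -> ('I_n -> R) -> R)
  (h_bil : forall n, (2 <= n)%N -> forall p : 'I_n -> R, in_simplex p ->
     cotangent_bilinear (h n p))
  (h_sym : forall n, (2 <= n)%N -> forall p : 'I_n -> R, in_simplex p ->
     cotangent_symmetric (h n p))
  (h_nondeg : forall n, (2 <= n)%N -> forall p : 'I_n -> R, in_simplex p ->
     nondegenerate_form (h n p))
  (h_cont : forall n, (2 <= n)%N -> forall A B : 'I_n -> R,
     continuous_on_simplex (fun p => h n p A B)) :
  (exists2 c : R, c != 0 &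
     forall n, (2 <= n)%N -> forall p : 'I_n -> R, in_simplex p ->
       forall A B, h n p A B = c * fisher p A B)
  <->
  (forall m n, (2 <= m)%N -> (m <= n)%N ->
     forall (W : 'I_m -> 'I_n -> R) (V : 'I_n -> 'I_m -> R),
       markov_channel W -> markov_channel V ->
       (forall p : 'I_m -> R, in_simplex p ->
          forall x, markov_map V (markov_map W p) x = p x) ->
       forall p : 'I_m -> R, in_simplex p ->
       forall (A : 'I_m -> R) (B : 'I_n -> R),
         h m p A (markov_pullback W B)
         = h n (markov_map W p) (markov_pullback V A) B).
Proof.
split.
- case=> c _ hc m n m2 mn W V HW HV VW p sp A B.
  rewrite hc // (hc n (leq_trans m2 mn) _ (markov_map_simplex HW sp)).
  by rewrite (fisher_markov_invariant HW HV VW).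
- move=> h_inv; have [c hc] := rational_point_scale h_bil h_inv.
  exists c => [|n n2 p sp A B].
  + apply/eqP => c0.
    have su := unif_simplex R (isT : 0 < 2)%N.
    apply: (nondegenerate_form_nonzero (leqnn 2) (h_nondeg 2 (leqnn 2) _ su)) => A B.
    have := hc 2 (fun _ => 1%N) (leqnn 2) (fun _ => isT) A B.
    by rewrite rational_point_const // c0 mul0r.
  + have contg := continuous_on_simplexZ c (fisher_continuous A B).
    by apply: (eq_on_simplex_of_rational (h_cont n n2 A B) contg) => // k k0; apply: hc.
Qed.
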